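(* Let $k\geq 1$ and $n\geq 1$ be integers. Then 1. $B_{k,2n}=B_{k,n}\bigl(B_{k,n+1}+(1-k)B_{k,n-1}\bigr)$; 2. $B_{k,2n-1}=B_{k,n}^2+(1-k)B_{k,n-1}^2$.
   Context: For an integer $k\geq 1$, the generalized balancing numbers are defined by $B_{k,0}=0$, $B_{k,1}=1$ and $B_{k,n}=3kB_{k,n-1}+(1-k)B_{k,n-2}$ for $n\geq 2$. *)

From mathcomp Require Import all_boot all_order all_algebra.
Set Implicit Arguments. Unset Strict Implicit. Unset Printing Implicit Defensive.
Import Order.TTheory GRing.Theory Num.Theory.
Local Open Scope ring_scope.

Fixpoint genBal (k : nat) (n : nat) : int :=
  match n with
  | 0%N => 0
  | 1%N => 1
  | (m.+1 as n1).+1 =>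
      (3 * k)%:Z * genBal k n1 + (1 - k%:Z) * genBal k m
  end.

(* B_{k,n} is the Lucas sequence of the recurrence u_{n+2} = a u_{n+1} + b u_n
   with a = 3k, b = 1 - k.  For any such sequence the addition formula
   u_{m+n+1} = u_{m+1} u_{n+1} + b u_m u_n follows by induction on m, and the two
   identities are its cases (m, n) := (n - 1, n) and (n - 1, n - 1). *)

From mathcomp Require Import all_boot all_order all_algebra.
From mathcomp Require Import ring.

Set Implicit Arguments.
Unset Strict Implicit.
Unset Printing Implicit Defensive.
Import Order.TTheory GRing.Theory Num.Theory.
Local Open Scope ring_scope.

Section LucasSequence.

Variables (R : comPzRingType) (a b : R) (u : nat -> R).
Hypotheses (u0 : u 0%N = 0) (u1 : u 1%N = 1)
  (uSS : forall n, u n.+2 = a * u n.+1 + b * u n).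

Lemma lucas_addn m n : u (m + n).+1 = u m.+1 * u n.+1 + b * u m * u n.
Proof.
elim: m n => [|m IHm] n; first by rewrite add0n u0 u1; ring.
by rewrite addSnnS IHm !uSS; ring.
Qed.

Lemma lucas_double n : u (2 * n.+1) = u n.+1 * (u n.+2 + b * u n).
Proof. by rewrite mul2n -addnn addnS lucas_addn; ring. Qed.

Lemma lucas_double_pred n : u (n + n).+1 = u n.+1 ^+ 2 + b * u n ^+ 2.
Proof. by rewrite lucas_addn; ring. Qed.

End LucasSequence.

Lemma genBalSS k n :
  genBal k n.+2 = (3 * k)%:Z * genBal k n.+1 + (1 - k%:Z) * genBal k n.
Proof. by []. Qed.

Theorem mainTheorem20 (k n : nat) (hk : (1 <= k)%N) (hn : (1 <= n)%N) :
  genBal k (2 * n) = genBal k n * (genBal k n.+1 + (1 - k%:Z) * genBal k n.-1)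
  /\ genBal k (2 * n).-1 = genBal k n ^+ 2 + (1 - k%:Z) * genBal k n.-1 ^+ 2.
Proof.
case: n hn => [//|n] _; rewrite [n.+1.-1]/=.
have -> : (2 * n.+1).-1 = (n + n).+1 by rewrite mul2n -addnn addnS.
split; first by apply: (lucas_double _ _ (genBalSS k)).
by apply: (lucas_double_pred _ _ (genBalSS k)).
Qed.
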